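(* Let $\mathbb{F}_2=\langle a\rangle\ast\langle b\rangle$, let $f_A:\langle a\rangle\to\mathbb{R}$ be a bounded, alternating, periodic function, and let $f=f_A\ast 0$. Then the stabilizers $\mathrm{Stab}_{\mathrm{Aut}(\mathbb{F}_2)}(f)$, $\mathrm{Stab}_{\mathrm{Out}(\mathbb{F}_2)}(\widehat f)$ and $\mathrm{Stab}_{\mathrm{Out}(\mathbb{F}_2)}(\omega_f)$ are infinite.
   Context: Alternating means $f_A(x^{-1})=-f_A(x)$; periodic means $f_A(a^{k+n})=f_A(a^k)$ for some $n\neq0$ and all $k$. Each non-trivial element of $\mathbb{F}_2$ has a unique normal form $a^{k_1}b^{l_1}\cdots a^{k_m}b^{l_m}$ with all exponents non-zero except possibly $k_1$ or $l_m$, and $f(1)=0$, $f(a^{k_1}b^{l_1}\cdots a^{k_m}b^{l_m})=f_A(a^{k_1})+\dots+f_A(a^{k_m})$. Automorphisms act on functions by $\tau.f=f\circ\tau^{-1}$; $\widehat f(g)=\lim_{k\to\infty}f(g^k)/k$ is the homogenization (conjugation invariant, so the action on homogeneous quasimorphisms factors through $\mathrm{Out}(\mathbb{F}_2)$); $\omega_f\in\mathrm{H}^2_\mathrm{b}(\mathbb{F}_2,\mathbb{R})$ is the bounded class of $\partial f(g,h)=f(g)+f(h)-f(gh)$ with the natural action $\tau.\omega_f=\omega_{\tau.f}$ of $\mathrm{Out}(\mathbb{F}_2)$. *)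

From Stdlib Require Import Reals Lra Lia ZArith List Bool.
From Coquelicot Require Import Coquelicot.
Import ListNotations.
Open Scope R_scope.

Inductive gen := ga | gb.

(* a letter (g, s): the generator g if s = false, its inverse if s = true *)
Definition letter := (gen * bool)%type.

Definition gen_eqb (x y : gen) : bool :=
  match x, y with ga, ga => true | gb, gb => true | _, _ => false end.

Definition letter_eqb (x y : letter) : bool :=
  gen_eqb (fst x) (fst y) && Bool.eqb (snd x) (snd y).

Definition linv (x : letter) : letter := (fst x, negb (snd x)).

Definition step (x : letter) (s : list letter) : list letter :=
  match s with
  | y :: s' => if letter_eqb y (linv x) then s' else x :: s
  | [] => [x]
  end.

Fixpoint red (w : list letter) : list letter :=
  match w with
  | [] => []
  | x :: w' => step x (red w')
  end.

Lemma step_length x s : (length (step x s) <= S (length s))%nat.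
Proof.
  destruct s as [|y s]; simpl; [lia|].
  destruct (letter_eqb y (linv x)); simpl; lia.
Qed.

Lemma red_length w : (length (red w) <= length w)%nat.
Proof.
  induction w as [|x w IH]; simpl; [lia|].
  pose proof (step_length x (red w)); lia.
Qed.

Lemma red_step r : red r = r -> forall x, red (step x r) = step x r.
Proof.
  intros Hr x. destruct r as [|y r'']; [reflexivity|].
  assert (Hr'' : red r'' = r'').
  { simpl in Hr. destruct (red r'') as [|z s'] eqn:Hs.
    - simpl in Hr. inversion Hr; subst; first [exact Hs | reflexivity].
    - simpl in Hr. destruct (letter_eqb z (linv y)).
      + subst s'. pose proof (red_length r'') as Hl. rewrite Hs in Hl.
        simpl in Hl. lia.
      + inversion Hr; subst; first [exact Hs | reflexivity]. }
  simpl. destruct (letter_eqb y (linv x)) eqn:E.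
  - exact Hr''.
  - change (red (x :: y :: r'')) with (step x (red (y :: r''))).
    rewrite Hr. simpl. rewrite E. reflexivity.
Qed.

Lemma red_idem w : red (red w) = red w.
Proof.
  induction w as [|x w IH]; [reflexivity|].
  simpl. apply red_step. exact IH.
Qed.

Definition F2 := { w : list letter | red w = w }.

Definition norm (w : list letter) : F2 := exist _ (red w) (red_idem w).

Definition word (g : F2) : list letter := proj1_sig g.

Definition one : F2 := norm [].
Definition mult (g h : F2) : F2 := norm (word g ++ word h).
Definition ginv (g : F2) : F2 := norm (rev (map linv (word g))).
Fixpoint gpow (g : F2) (k : nat) : F2 :=
  match k with O => one | S k' => mult g (gpow g k') end.

Definition lsign (s : bool) : Z := if s then (-1)%Z else 1%Z.

(* [fsum fA acc w]: acc is the exponent of the current (maximal) run of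
   a-letters; each maximal a-syllable a^k (k <> 0) contributes fA k,
   b-syllables contribute 0. *)
Fixpoint fsum (fA : Z -> R) (acc : Z) (w : list letter) : R :=
  match w with
  | [] => if Z.eqb acc 0 then 0 else fA acc
  | (ga, s) :: w' => fsum fA (acc + lsign s)%Z w'
  | (gb, _) :: w' => (if Z.eqb acc 0 then 0 else fA acc) + fsum fA 0%Z w'
  end.

(* fA k represents f_A(a^k) *)
Definition free_prod_zero (fA : Z -> R) : F2 -> R :=
  fun g => fsum fA 0%Z (word g).

Definition bounded_Z (fA : Z -> R) : Prop := exists C, forall k, Rabs (fA k) <= C.
Definition alternating (fA : Z -> R) : Prop := forall k, fA (- k)%Z = - fA k.
Definition periodic (fA : Z -> R) : Prop :=
  exists n : Z, n <> 0%Z /\ forall k, fA (k + n)%Z = fA k.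

Record Aut := {
  fwd : F2 -> F2;
  bwd : F2 -> F2;
  fwd_hom : forall x y, fwd (mult x y) = mult (fwd x) (fwd y);
  bwd_fwd : forall x, bwd (fwd x) = x;
  fwd_bwd : forall x, fwd (bwd x) = x }.

Definition act (tau : Aut) (f : F2 -> R) : F2 -> R := fun g => f (bwd tau g).

Definition homog (f : F2 -> R) : F2 -> R :=
  fun g => real (Lim_seq (fun k => f (gpow g k) / INR k)).

Definition cob (f : F2 -> R) (g h : F2) : R := f g + f h - f (mult g h).

Definition bounded_F2 (b : F2 -> R) : Prop := exists C, forall g, Rabs (b g) <= C.

(* omega_{f1} = omega_{f2} in H^2_b(F_2,R): the bounded cocycles differ by the
   coboundary of a bounded 1-cochain *)
Definition same_bclass (f1 f2 : F2 -> R) : Prop :=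
  exists beta, bounded_F2 beta /\
    forall g h, cob f1 g h - cob f2 g h = cob beta g h.

(* tau and sigma have the same image in Out(F_2) *)
Definition out_eq (tau sigma : Aut) : Prop :=
  exists c : F2, forall g, fwd tau g = mult (mult c (fwd sigma g)) (ginv c).

Definition aut_eq (tau sigma : Aut) : Prop := forall g, fwd tau g = fwd sigma g.

Definition stab_Aut (f : F2 -> R) (tau : Aut) : Prop :=
  forall g, act tau f g = f g.

(* the stabilizers in Out are unions of Inn-cosets; we describe them by
   their preimages in Aut *)
Definition stab_Out_homog (f : F2 -> R) (tau : Aut) : Prop :=
  forall g, act tau (homog f) g = homog f g.

Definition stab_Out_bclass (f : F2 -> R) (tau : Aut) : Prop :=
  same_bclass (act tau f) f.

Definition infinite_in_Aut (P : Aut -> Prop) : Prop :=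
  forall l : list Aut, exists tau, P tau /\ forall sigma, In sigma l -> ~ aut_eq tau sigma.

(* the image of P in Out(F_2) is infinite *)
Definition infinite_in_Out (P : Aut -> Prop) : Prop :=
  forall l : list Aut, exists tau, P tau /\ forall sigma, In sigma l -> ~ out_eq tau sigma.

From Stdlib Require Import Reals ZArith List Lia Lra Bool ProofIrrelevance.
From Coquelicot Require Import Lim_seq.
Import ListNotations.

(* The transvections tau_K : a |-> a, b |-> b a^K are automorphisms of F_2. On the normal form
   a^p0 b^e1 a^p1 ... b^em a^pm, tau_K adds K to the a-exponent following each b and subtracts K
   from the one preceding each b^-1; an exponent between b and b^-1 is therefore unchanged, so no
   new cancellation occurs and the syllables of tau_K g are the shifted syllables of g. As f sums
   f_A over the a-syllables and f_A 0 = 0 (f_A is alternating), f is tau_K-invariant as soon as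
   the period n of f_A divides K, and then so are its homogenization and its bounded class.
   The a-exponent sum of tau b is a conjugacy invariant equal to K for tau_K, so the tau_(cn)
   are pairwise distinct in Out(F_2). *)

Lemma letter_eqb_refl x : letter_eqb x x = true.
Proof. destruct x as [[] []]; reflexivity. Qed.

Lemma letter_eqb_eq x y : letter_eqb x y = true -> x = y.
Proof. destruct x as [[] []], y as [[] []]; cbv; congruence. Qed.

Lemma linv_involutive x : linv (linv x) = x.
Proof. destruct x as [g s]; unfold linv; simpl; rewrite negb_involutive; reflexivity. Qed.

Definition winv (u : list letter) : list letter := rev (map linv u).

Lemma winv_involutive u : winv (winv u) = u.
Proof.
  unfold winv. rewrite map_rev, rev_involutive, map_map.
  rewrite <- (map_id u) at 2. apply map_ext, linv_involutive.
Qed.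

Lemma winv_app u v : winv (u ++ v) = winv v ++ winv u.
Proof. unfold winv. rewrite map_app, rev_app_distr. reflexivity. Qed.

Lemma winv_cons x u : winv (x :: u) = winv u ++ [linv x].
Proof. reflexivity. Qed.

Lemma red_tail x s : red (x :: s) = x :: s -> red s = s.
Proof.
  simpl. intro H. destruct (red s) as [|y t] eqn:E.
  - simpl in H. inversion H. reflexivity.
  - simpl in H. destruct (letter_eqb y (linv x)).
    + subst t. pose proof (red_length s) as Hl. rewrite E in Hl. simpl in Hl. lia.
    + inversion H. reflexivity.
Qed.

Lemma step_linv x s : red s = s -> step x (step (linv x) s) = s.
Proof.
  intro Hs. destruct s as [|z s'].
  - simpl. rewrite letter_eqb_refl. reflexivity.
  - simpl. destruct (letter_eqb z (linv (linv x))) eqn:E.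
    + apply letter_eqb_eq in E. rewrite linv_involutive in E. subst z.
      simpl in Hs. rewrite (red_tail _ _ Hs) in Hs. exact Hs.
    + simpl. rewrite letter_eqb_refl. reflexivity.
Qed.

Lemma red_app_step x r v : red (step x r ++ v) = step x (red (r ++ v)).
Proof.
  destruct r as [|y r']; [reflexivity|].
  simpl. destruct (letter_eqb y (linv x)) eqn:E; [|reflexivity].
  apply letter_eqb_eq in E. subst y. simpl.
  rewrite step_linv; [reflexivity | apply red_idem].
Qed.

Lemma red_app_redl u v : red (red u ++ v) = red (u ++ v).
Proof.
  induction u as [|x u IH]; [reflexivity|].
  simpl. rewrite red_app_step, IH. reflexivity.
Qed.

Lemma red_app_redr u v : red (u ++ red v) = red (u ++ v).
Proof.
  induction u as [|x u IH]; simpl; [apply red_idem|]. rewrite IH. reflexivity.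
Qed.

Lemma red_app_redm u v w : red (u ++ red v ++ w) = red (u ++ v ++ w).
Proof. rewrite <- red_app_redr, red_app_redl, red_app_redr. reflexivity. Qed.

Lemma red_app_winvK u v : red (u ++ winv u ++ v) = red v.
Proof.
  revert v. induction u as [|x u IH]; intro v; [reflexivity|].
  rewrite winv_cons, <- !app_assoc. simpl. rewrite (IH (linv x :: v)).
  apply step_linv, red_idem.
Qed.

Lemma red_winv_appK u v : red (winv u ++ u ++ v) = red v.
Proof. rewrite <- (winv_involutive u) at 2. apply red_app_winvK. Qed.

Lemma red_winv u v : red u = red v -> red (winv u) = red (winv v).
Proof.
  intro E.
  rewrite <- (app_nil_r (winv u)), <- (red_app_redr (winv u) []).
  rewrite <- (red_app_winvK v []), red_app_redr, app_nil_r.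
  rewrite <- red_app_redm, <- E, red_app_redm. apply red_winv_appK.
Qed.

Lemma word_red (g : F2) : red (word g) = word g.
Proof. destruct g; assumption. Qed.

Lemma word_norm w : word (norm w) = red w.
Proof. reflexivity. Qed.

Lemma norm_red (g : F2) w : red w = word g -> norm w = g.
Proof.
  destruct g as [w0 H]. simpl. intro E. unfold norm.
  apply ProofIrrelevanceTheory.subset_eq_compat. exact E.
Qed.

Lemma mult_one_l x : mult one x = x.
Proof. apply norm_red, word_red. Qed.

Lemma mult_one_r x : mult x one = x.
Proof. apply norm_red. simpl. rewrite app_nil_r. apply word_red. Qed.

Lemma mult_ginv_r x : mult x (ginv x) = one.
Proof.
  apply norm_red. simpl. rewrite red_app_redr, <- (app_nil_r (rev _)).
  apply (red_app_winvK (word x) []).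
Qed.

Lemma mult_assoc x y z : mult (mult x y) z = mult x (mult y z).
Proof.
  apply norm_red. simpl. rewrite red_app_redl, red_app_redr, app_assoc. reflexivity.
Qed.

Lemma mult_idem_one a : mult a a = a -> a = one.
Proof.
  intro H. transitivity (mult (mult a a) (ginv a)).
  - rewrite mult_assoc, mult_ginv_r, mult_one_r. reflexivity.
  - rewrite H. apply mult_ginv_r.
Qed.

Lemma aut_fwd_one t : fwd t one = one.
Proof. apply mult_idem_one. rewrite <- fwd_hom, mult_one_l. reflexivity. Qed.

Lemma aut_bwd_one t : bwd t one = one.
Proof. rewrite <- (aut_fwd_one t) at 1. apply bwd_fwd. Qed.

Lemma aut_bwd_mult t x y : bwd t (mult x y) = mult (bwd t x) (bwd t y).
Proof. rewrite <- (bwd_fwd t (mult (bwd t x) _)), fwd_hom, !fwd_bwd. reflexivity. Qed.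

Lemma aut_bwd_gpow t g m : bwd t (gpow g m) = gpow (bwd t g) m.
Proof.
  induction m as [|m IH]; simpl; [apply aut_bwd_one|].
  rewrite aut_bwd_mult, IH. reflexivity.
Qed.

Lemma aut_eq_out_eq t s : aut_eq t s -> out_eq t s.
Proof.
  intro E. exists one. intro g. rewrite E, mult_one_l. apply eq_sym, mult_one_r.
Qed.

Lemma stab_Aut_homog f t : stab_Aut f t -> stab_Out_homog f t.
Proof.
  intros Hf g. unfold act, homog. f_equal. apply Lim_seq_ext. intro m.
  rewrite <- aut_bwd_gpow. f_equal. apply Hf.
Qed.

Lemma stab_Aut_bclass f t : stab_Aut f t -> stab_Out_bclass f t.
Proof.
  intro Hf. exists (fun _ => 0). split.
  - exists 0. intro. rewrite Rabs_R0. lra.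
  - intros g h. unfold cob. rewrite !Hf. lra.
Qed.

Lemma infinite_in_Out_Aut P : infinite_in_Out P -> infinite_in_Aut P.
Proof.
  intros H l. destruct (H l) as [t [Pt Ht]].
  exists t. split; [exact Pt|]. intros s Hs E. exact (Ht s Hs (aut_eq_out_eq _ _ E)).
Qed.

Lemma infinite_in_Out_mono (P Q : Aut -> Prop) :
  (forall t, P t -> Q t) -> infinite_in_Out P -> infinite_in_Out Q.
Proof.
  intros PQ H l. destruct (H l) as [t [Pt Ht]]. exists t. split; [apply PQ|]; assumption.
Qed.

Lemma infinite_in_Out_unbounded (phi : Aut -> Z) (P : Aut -> Prop) :
  (forall t s, out_eq t s -> phi t = phi s) ->
  (forall N : nat, exists t, P t /\ (N < Z.abs_nat (phi t))%nat) ->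
  infinite_in_Out P.
Proof.
  intros Hphi Hunb l.
  destruct (Hunb (list_sum (map (fun s => Z.abs_nat (phi s)) l))) as [t [Pt Ht]].
  exists t. split; [exact Pt|]. intros s Hs E. rewrite (Hphi _ _ E) in Ht.
  enough (Z.abs_nat (phi s) <= list_sum (map (fun s => Z.abs_nat (phi s)) l))%nat by lia.
  clear - Hs. induction l as [|s' l IH]; [destruct Hs|].
  destruct Hs as [->|Hs]; simpl; [lia|]. specialize (IH Hs). lia.
Qed.

Definition letter_aexp (x : letter) : Z :=
  match x with (ga, s) => lsign s | (gb, _) => 0%Z end.

Fixpoint aexp (w : list letter) : Z :=
  match w with [] => 0%Z | x :: w' => (letter_aexp x + aexp w')%Z end.

Lemma aexp_app u v : aexp (u ++ v) = (aexp u + aexp v)%Z.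
Proof. induction u as [|x u IH]; simpl; [reflexivity|]. rewrite IH. lia. Qed.

Lemma aexp_step x r : aexp (step x r) = (letter_aexp x + aexp r)%Z.
Proof.
  destruct r as [|y r']; [reflexivity|]. simpl.
  destruct (letter_eqb y (linv x)) eqn:E; [|reflexivity].
  apply letter_eqb_eq in E. subst y.
  destruct x as [[] []]; cbn [linv fst snd negb aexp letter_aexp lsign]; lia.
Qed.

Lemma aexp_red w : aexp (red w) = aexp w.
Proof. induction w as [|x w IH]; simpl; [reflexivity|]. rewrite aexp_step, IH. reflexivity. Qed.

Lemma aexp_winv u : aexp (winv u) = (- aexp u)%Z.
Proof.
  induction u as [|x u IH]; [reflexivity|].
  rewrite winv_cons, aexp_app, IH.
  destruct x as [[] []]; cbn [linv fst snd negb aexp letter_aexp lsign]; lia.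
Qed.

Lemma aexp_mult x y : aexp (word (mult x y)) = (aexp (word x) + aexp (word y))%Z.
Proof. unfold mult. rewrite word_norm, aexp_red, aexp_app. reflexivity. Qed.

Definition gen_b : F2 := norm [(gb, false)].

Definition aexp_of_b (t : Aut) : Z := aexp (word (fwd t gen_b)).

Lemma aexp_of_b_out_eq t s : out_eq t s -> aexp_of_b t = aexp_of_b s.
Proof.
  intros [c Hc]. unfold aexp_of_b. rewrite Hc, !aexp_mult.
  unfold ginv. rewrite word_norm, aexp_red. fold (winv (word c)). rewrite aexp_winv. lia.
Qed.

Definition apow (K : Z) : list letter := repeat (ga, (K <? 0)%Z) (Z.abs_nat K).

Lemma aexp_apow K : aexp (apow K) = K.
Proof.
  unfold apow. enough (forall s m, aexp (repeat (ga, s) m) = lsign s * Z.of_nat m)%Z as ->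
    by (rewrite Zabs2Nat.id_abs; destruct (Z.ltb_spec K 0); cbn [lsign]; lia).
  intros s m. induction m as [|m IH]; simpl; [lia|]. rewrite IH. lia.
Qed.

Lemma winv_apow K : winv (apow K) = apow (- K).
Proof.
  unfold winv, apow. rewrite map_repeat, rev_repeat.
  replace (Z.abs_nat (- K)) with (Z.abs_nat K) by lia.
  destruct (Z.eq_dec K 0) as [->|HK]; [reflexivity|].
  unfold linv. simpl. f_equal. f_equal.
  destruct (Z.ltb_spec K 0), (Z.ltb_spec (- K) 0); simpl; lia || reflexivity.
Qed.

Definition tv_letter (K : Z) (x : letter) : list letter :=
  match x with
  | (ga, _) => [x]
  | (gb, false) => (gb, false) :: apow K
  | (gb, true) => winv ((gb, false) :: apow K)
  end.

Definition tv_word (K : Z) (w : list letter) : list letter := flat_map (tv_letter K) w.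

Lemma tv_word_app K u v : tv_word K (u ++ v) = tv_word K u ++ tv_word K v.
Proof. apply flat_map_app. Qed.

Lemma tv_word_apow K L : tv_word K (apow L) = apow L.
Proof.
  unfold apow. generalize (Z.abs_nat L) as m.
  induction m as [|m IH]; [reflexivity|]. simpl. f_equal. exact IH.
Qed.

Lemma tv_letter_linv K x : tv_letter K (linv x) = winv (tv_letter K x).
Proof. destruct x as [[] []]; try reflexivity. simpl. rewrite winv_involutive. reflexivity. Qed.

Lemma tv_word_winv K u : tv_word K (winv u) = winv (tv_word K u).
Proof.
  induction u as [|x u IH]; [reflexivity|].
  rewrite winv_cons, tv_word_app, IH.
  change (tv_word K [linv x]) with (tv_letter K (linv x) ++ []).
  change (tv_word K (x :: u)) with (tv_letter K x ++ tv_word K u).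
  rewrite app_nil_r, tv_letter_linv, winv_app. reflexivity.
Qed.

Lemma red_tv_word_step K x r : red (tv_word K (step x r)) = red (tv_letter K x ++ tv_word K r).
Proof.
  destruct r as [|y r']; [reflexivity|].
  simpl. destruct (letter_eqb y (linv x)) eqn:E; [|reflexivity].
  apply letter_eqb_eq in E. subst y. rewrite tv_letter_linv, red_app_winvK. reflexivity.
Qed.

Lemma red_tv_word_red K w : red (tv_word K (red w)) = red (tv_word K w).
Proof.
  induction w as [|x w IH]; [reflexivity|].
  simpl red at 2. rewrite red_tv_word_step. simpl.
  rewrite <- red_app_redr. unfold tv_word in IH |- *. rewrite IH, red_app_redr. reflexivity.
Qed.

Lemma red_tv_letter_inverse K x : red (tv_word (- K) (tv_letter K x)) = [x].
Proof.
  assert (Hb : red (tv_word (- K) ((gb, false) :: apow K)) = [(gb, false)]).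
  { change (step (gb, false) (red (apow (- K) ++ tv_word (- K) (apow K))) = [(gb, false)]).
    rewrite tv_word_apow, <- winv_apow, <- (app_nil_r (winv (apow K) ++ apow K)), <- app_assoc.
    rewrite red_winv_appK. reflexivity. }
  destruct x as [[] []]; try reflexivity; simpl tv_letter; [|exact Hb].
  rewrite tv_word_winv. apply (red_winv _ [(gb, false)]). rewrite Hb. reflexivity.
Qed.

Definition tv (K : Z) (g : F2) : F2 := norm (tv_word K (word g)).

Lemma tv_mult K x y : tv K (mult x y) = mult (tv K x) (tv K y).
Proof.
  apply norm_red. simpl.
  rewrite red_tv_word_red, tv_word_app, red_app_redl, red_app_redr. reflexivity.
Qed.

Lemma red_tv_word_inverse K w : red (tv_word (- K) (tv_word K w)) = red w.
Proof.
  induction w as [|x w IH]; [reflexivity|].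
  change (tv_word (- K) (tv_word K (x :: w)))
    with (tv_word (- K) (tv_letter K x ++ tv_word K w)).
  rewrite tv_word_app, <- red_app_redr, IH, <- red_app_redl, red_tv_letter_inverse.
  apply (red_app_redr [x]).
Qed.

Lemma tv_inverse K g : tv (- K) (tv K g) = g.
Proof.
  apply norm_red. simpl. rewrite red_tv_word_red, red_tv_word_inverse. apply word_red.
Qed.

Lemma tv_inverse_r K g : tv K (tv (- K) g) = g.
Proof. rewrite <- (Z.opp_involutive K) at 1. apply tv_inverse. Qed.

Definition transvection (K : Z) : Aut := {|
  fwd := tv K; bwd := tv (- K);
  fwd_hom := tv_mult K;
  bwd_fwd := tv_inverse K;
  fwd_bwd := tv_inverse_r K |}.

Lemma aexp_of_b_transvection K : aexp_of_b (transvection K) = K.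
Proof.
  unfold aexp_of_b, transvection, tv. simpl fwd.
  rewrite word_norm, aexp_red. cbn [aexp letter_aexp]. rewrite app_nil_r, aexp_apow. reflexivity.
Qed.

Lemma reduced_adjacent x y w : red (x :: y :: w) = x :: y :: w -> y <> linv x.
Proof.
  intros Hr ->. pose proof (red_tail _ _ Hr) as Ht.
  change (step x (red (linv x :: w)) = x :: linv x :: w) in Hr.
  rewrite Ht in Hr. simpl in Hr. rewrite letter_eqb_refl in Hr.
  apply (f_equal (@length _)) in Hr. simpl in Hr. lia.
Qed.

(* [syllables (a^p0 b^e1 a^p1 ... b^em a^pm) = (p0, [(i1, p1); ...; (im, pm)])], where
   [ik] is the inverse flag of the letter [b^ek]; the pk may be zero. *)
Fixpoint syllables (w : list letter) : Z * list (bool * Z) :=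
  match w with
  | [] => (0%Z, [])
  | (ga, s) :: w' => ((fst (syllables w') + lsign s)%Z, snd (syllables w'))
  | (gb, s) :: w' => (0%Z, (s, fst (syllables w')) :: snd (syllables w'))
  end.

(* No b b^-1 or b^-1 b cancels: such a pair is separated by a non-zero a-power. *)
Fixpoint separated (l : list (bool * Z)) : Prop :=
  match l with
  | [] => True
  | (s1, q1) :: rest =>
      (match rest with (s2, _) :: _ => q1 <> 0%Z \/ s1 = s2 | [] => True end) /\ separated rest
  end.

Definition next_is_binv (l : list (bool * Z)) : bool :=
  match l with (true, _) :: _ => true | _ => false end.

(* b |-> b a^K adds K after every b and subtracts K before every b^-1. *)
Fixpoint shift_tail (K : Z) (l : list (bool * Z)) : list (bool * Z) :=
  match l with
  | [] => []
  | (s, q) :: rest =>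
      (s, (q + (if s then 0 else K) - (if next_is_binv rest then K else 0))%Z) :: shift_tail K rest
  end.

Definition shift_syllables (K : Z) (pl : Z * list (bool * Z)) : Z * list (bool * Z) :=
  ((fst pl - (if next_is_binv (snd pl) then K else 0))%Z, shift_tail K (snd pl)).

Lemma syllables_apow_app K t :
  syllables (apow K ++ t) = ((fst (syllables t) + K)%Z, snd (syllables t)).
Proof.
  transitivity ((fst (syllables t) + aexp (apow K))%Z, snd (syllables t));
    [|rewrite aexp_apow; reflexivity].
  unfold apow. induction (Z.abs_nat K) as [|m IH]; simpl.
  - destruct (syllables t); simpl; f_equal; lia.
  - rewrite IH. simpl. f_equal. lia.
Qed.

Lemma syllables_tv_word K w : syllables (tv_word K w) = shift_syllables K (syllables w).
Proof.
  induction w as [|[[] s] w IH]; [reflexivity| |].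
  - change (tv_word K ((ga, s) :: w)) with ((ga, s) :: tv_word K w).
    simpl syllables. rewrite IH. unfold shift_syllables. simpl. f_equal. lia.
  - destruct s.
    + change (tv_word K ((gb, true) :: w))
        with (winv ((gb, false) :: apow K) ++ tv_word K w).
      rewrite winv_cons, winv_apow, <- app_assoc, syllables_apow_app.
      simpl. rewrite IH. unfold shift_syllables. simpl. f_equal. f_equal. f_equal. lia.
    + change (tv_word K ((gb, false) :: w)) with ((gb, false) :: apow K ++ tv_word K w).
      simpl syllables. rewrite syllables_apow_app, IH. unfold shift_syllables. simpl.
      f_equal. f_equal. f_equal. lia.
Qed.

Lemma syllables_red v : separated (snd (syllables v)) -> syllables (red v) = syllables v.
Proof.
  induction v as [|x v IH]; [reflexivity|]. intro Hs.
  assert (Hs' : separated (snd (syllables v))).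
  { destruct x as [[] s]; simpl in Hs; [exact Hs|]. apply Hs. }
  specialize (IH Hs'). simpl red.
  destruct (red v) as [|y r'] eqn:E.
  - destruct x as [[] s]; simpl; rewrite <- IH; reflexivity.
  - simpl step. destruct (letter_eqb y (linv x)) eqn:Ey.
    + apply letter_eqb_eq in Ey. subst y. destruct x as [[] s].
      * simpl in IH |- *. rewrite <- IH. simpl. destruct (syllables r') as [p l]. simpl.
        f_equal. destruct s; simpl; lia.
      * simpl in IH, Hs. rewrite <- IH in Hs. simpl in Hs.
        destruct Hs as [[H|H] _]; [congruence|]. destruct s; discriminate.
    + destruct x as [[] s]; simpl; rewrite <- IH; reflexivity.
Qed.

Lemma reduced_lead_aexp s w :
  red ((ga, s) :: w) = (ga, s) :: w -> (lsign s * fst (syllables ((ga, s) :: w)) > 0)%Z.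
Proof.
  revert s. induction w as [|x w IH]; intros s Hr; [destruct s; simpl; lia|].
  pose proof (red_tail _ _ Hr) as Ht.
  destruct x as [[] s']; cbn [syllables fst]; [|destruct s; simpl; lia].
  assert (s' = s) as ->.
  { pose proof (reduced_adjacent _ _ _ Hr) as Hne.
    destruct s, s'; try reflexivity; exfalso; apply Hne; reflexivity. }
  specialize (IH s Ht). cbn [syllables fst] in IH. destruct s; cbn [lsign] in *; lia.
Qed.

Lemma separated_reduced w : red w = w -> separated (snd (syllables w)).
Proof.
  induction w as [|x w IH]; [simpl; tauto|]. intro Hr.
  pose proof (red_tail _ _ Hr) as Ht. specialize (IH Ht).
  destruct x as [[] e]; simpl; [exact IH|]. split; [|exact IH].
  destruct w as [|[[] s] w'].
  - exact I.
  - simpl. destruct (snd (syllables w')) as [|[s2 q2] l]; [exact I|]. left.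
    pose proof (reduced_lead_aexp _ _ Ht) as L. simpl in L. intro Hz. rewrite Hz in L. lia.
  - right. pose proof (reduced_adjacent _ _ _ Hr) as Hne.
    destruct e, s; try reflexivity; exfalso; apply Hne; reflexivity.
Qed.

Lemma separated_shift K l : separated l -> separated (shift_tail K l).
Proof.
  induction l as [|[s1 q1] rest IH]; [simpl; tauto|].
  simpl. intros [H1 H2]. split; [|exact (IH H2)].
  destruct rest as [|[s2 q2] rest']; [exact I|]. simpl.
  destruct H1 as [H1|H1]; [|right; exact H1].
  destruct (Bool.bool_dec s1 s2) as [|n]; [right; assumption|left].
  destruct s1, s2; try congruence; lia.
Qed.

Fixpoint syllable_sum (fA : Z -> R) (l : list (bool * Z)) : R :=
  match l with [] => 0 | (_, q) :: l' => fA q + syllable_sum fA l' end.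

Lemma fsum_syllables fA acc w : fA 0%Z = 0 ->
  fsum fA acc w = fA (acc + fst (syllables w))%Z + syllable_sum fA (snd (syllables w)).
Proof.
  intro H0. revert acc. induction w as [|[[] s] w IH]; intro acc; simpl.
  - rewrite Z.add_0_r. destruct (Z.eqb_spec acc 0) as [->|]; [rewrite H0|]; lra.
  - rewrite IH. do 2 f_equal. lia.
  - rewrite IH, Z.add_0_r. destruct (Z.eqb_spec acc 0) as [->|]; [rewrite H0|]; simpl; lra.
Qed.

Lemma syllable_sum_shift fA K l : (forall z, fA (z + K)%Z = fA z) ->
  syllable_sum fA (shift_tail K l) = syllable_sum fA l.
Proof.
  intro HK. induction l as [|[s q] l IH]; [reflexivity|]. simpl. rewrite IH. f_equal.
  destruct s, (next_is_binv l).
  - rewrite <- (HK (q + 0 - K)%Z). f_equal. lia.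
  - f_equal. lia.
  - f_equal. lia.
  - rewrite <- (HK q). f_equal. lia.
Qed.

Lemma free_prod_zero_tv fA K g : fA 0%Z = 0 -> (forall z, fA (z + K)%Z = fA z) ->
  free_prod_zero fA (tv K g) = free_prod_zero fA g.
Proof.
  intros H0 HK. unfold free_prod_zero, tv. rewrite word_norm, !fsum_syllables by exact H0.
  rewrite syllables_red, syllables_tv_word.
  - unfold shift_syllables. simpl. rewrite syllable_sum_shift by exact HK. f_equal.
    destruct (next_is_binv (snd (syllables (word g)))); [|f_equal; lia].
    rewrite <- (HK (fst (syllables (word g)) - K)%Z). f_equal. lia.
  - rewrite syllables_tv_word. apply separated_shift, separated_reduced, word_red.
Qed.

Lemma periodic_multiple (fA : Z -> R) n : (forall k, fA (k + n)%Z = fA k) ->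
  forall c z, fA (z + c * n)%Z = fA z.
Proof.
  intros Hp c. induction c as [|c IH|c IH] using Z.peano_ind; intro z.
  - f_equal. lia.
  - rewrite <- (IH z), <- (Hp (z + c * n)%Z). f_equal. lia.
  - rewrite <- (IH z), <- (Hp (z + Z.pred c * n)%Z). f_equal. lia.
Qed.

Theorem corollary3p21 (fA : Z -> R) :
  bounded_Z fA -> alternating fA -> periodic fA ->
  infinite_in_Aut (stab_Aut (free_prod_zero fA)) /\
  infinite_in_Out (stab_Out_homog (free_prod_zero fA)) /\
  infinite_in_Out (stab_Out_bclass (free_prod_zero fA)).
Proof.
  intros _ Halt [n [Hn Hper]].
  assert (H0 : fA 0%Z = 0) by (pose proof (Halt 0%Z) as H; simpl in H; lra).
  assert (Hstab : forall c, stab_Aut (free_prod_zero fA) (transvection (c * n))).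
  { intros c g. apply free_prod_zero_tv; [exact H0|]. intro z.
    replace (z + - (c * n))%Z with (z + - c * n)%Z by lia. apply periodic_multiple, Hper. }
  assert (Hinf : infinite_in_Out (stab_Aut (free_prod_zero fA))).
  { apply (infinite_in_Out_unbounded aexp_of_b); [exact aexp_of_b_out_eq|].
    intro N. exists (transvection (Z.of_nat (S N) * n)). split; [apply Hstab|].
    rewrite aexp_of_b_transvection. nia. }
  split; [|split].
  - apply infinite_in_Out_Aut, Hinf.
  - exact (infinite_in_Out_mono _ _ (stab_Aut_homog _) Hinf).
  - exact (infinite_in_Out_mono _ _ (stab_Aut_bclass _) Hinf).
Qed.
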